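(* Let $\phi\in L^2(\mathbb{R}^3,\mathbb{C}^2)$ be not the zero function. Then there exists $A\in SU(2)$ such that $\phi$ and $A\bullet\phi$ are linearly independent.
   Context: Let $\sigma=(\sigma_1,\sigma_2,\sigma_3)$ be the Pauli matrices. To each $A\in SU(2)$ is associated the unique rotation $R_A\in SO(3)$ such that $(R_Ax)\cdot\sigma=A(x\cdot\sigma)A^{-1}$ for all $x\in\mathbb{R}^3$. The unitary representation $\bullet$ of $SU(2)$ on $L^2(\mathbb{R}^3,\mathbb{C}^2)$ is $(A\bullet\phi)(x):=A\,\phi(R_A^{-1}x)$. *)

From HB Require Import structures.
From mathcomp Require Import all_boot all_order all_algebra.
From mathcomp Require Import all_classical all_reals all_analysis.
From mathcomp Require Import complex.

Set Implicit Arguments.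
Unset Strict Implicit.
Unset Printing Implicit Defensive.

Import Order.TTheory GRing.Theory Num.Theory.
Local Open Scope classical_set_scope.
Local Open Scope ring_scope.
Local Open Scope complex_scope.

Section Defs.
Variable R : realType.

Definition R3 := ((R * R) * R)%type.

Definition leb3 := ((@lebesgue_measure R \x @lebesgue_measure R) \x @lebesgue_measure R)%E.

Definition vec3 (x : R3) : 'cV[R]_3 :=
  \col_(i < 3) (if i == 0 :> nat then x.1.1 else if i == 1 :> nat then x.1.2 else x.2).
Definition pt3 (v : 'cV[R]_3) : R3 := ((v 0 0, v 1 0), v 2 0).

Definition mx2 (a b c d : R[i]) : 'M[R[i]]_2 :=
  \matrix_(i < 2, j < 2) (if i == 0 :> nat then (if j == 0 :> nat then a else b)
                           else (if j == 0 :> nat then c else d)).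

Definition pauli (k : 'I_3) : 'M[R[i]]_2 :=
  if k == 0 :> nat then mx2 0 1 1 0
  else if k == 1 :> nat then mx2 0 (- 'i) 'i 0
  else mx2 1 0 0 (-1).

Definition xsigma (x : 'cV[R]_3) : 'M[R[i]]_2 := \sum_(k < 3) (x k 0)%:C *: pauli k.

Definition adj2 (A : 'M[R[i]]_2) : 'M[R[i]]_2 := (map_mx conjc A)^T.

Definition SU2 : set 'M[R[i]]_2 :=
  [set A | A *m adj2 A = 1%:M /\ \det A = 1].

Definition SO3 : set 'M[R]_3 :=
  [set M | M^T *m M = 1%:M /\ \det M = 1].

(* R_A : the (unique) rotation with (R_A x).sigma = A (x.sigma) A^{-1} for all x *)
Definition rotA (A : 'M[R[i]]_2) : 'M[R]_3 :=
  xget 1%:M [set M | SO3 M /\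
     forall x : 'cV[R]_3, xsigma (M *m x) = A *m xsigma x *m invmx A].

Definition act (A : 'M[R[i]]_2) (phi : R3 -> 'cV[R[i]]_2) : R3 -> 'cV[R[i]]_2 :=
  fun x => A *m phi (pt3 (invmx (rotA A) *m vec3 x)).

(* phi is (a representative of) an element of L^2(R^3, C^2) *)
Definition L2 (phi : R3 -> 'cV[R[i]]_2) : Prop :=
  (forall k : 'I_2, measurable_fun setT (fun x => complex.Re (phi x k 0)) /\
                    measurable_fun setT (fun x => complex.Im (phi x k 0))) /\
  (\int[leb3]_x (\sum_(k < 2) ((complex.Re (phi x k 0)) ^+ 2 + (complex.Im (phi x k 0)) ^+ 2))%:E < +oo)%E.

Definition lin_indep_L2 (phi psi : R3 -> 'cV[R[i]]_2) : Prop :=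
  forall a b : R[i], {ae leb3, forall x, a *: phi x + b *: psi x = 0} -> a = 0 /\ b = 0.

End Defs.

(** The elements iσ₁ and iσ₂ of SU(2) anticommute, and their rotations are the
    rotations by π about the first two coordinate axes: commuting involutions
    of R³ that preserve Lebesgue measure.  Hence U₁ := (iσ₁)• and U₂ := (iσ₂)•
    are invertible and anticommute on a.e.-classes.  If φ were linearly
    dependent on both U₁φ and U₂φ, it would be a common eigenvector, U₁φ = c₁φ
    and U₂φ = c₂φ, with c₁c₂ ≠ 0 by invertibility; then
    c₁c₂φ = U₁U₂φ = -U₂U₁φ = -c₁c₂φ forces φ = 0 almost everywhere. *)

From HB Require Import structures.
From mathcomp Require Import all_boot all_order all_algebra.
From mathcomp Require Import all_classical all_reals all_analysis.
From mathcomp Require Import complex ring.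

Set Implicit Arguments.
Unset Strict Implicit.
Unset Printing Implicit Defensive.

Import Order.TTheory GRing.Theory Num.Theory.
Local Open Scope classical_set_scope.
Local Open Scope ring_scope.
Local Open Scope complex_scope.

Section measure_preserving.
Local Open Scope ereal_scope.
Context {R : realType}.

Definition measure_preserving {d} {T : measurableType d} (mu : set T -> \bar R)
    (f : T -> T) :=
  measurable_fun setT f /\ forall A, measurable A -> pushforward mu f A = mu A.

Lemma measure_preserving_id d (T : measurableType d) (mu : set T -> \bar R) :
  measure_preserving mu id.
Proof. by []. Qed.

Lemma measure_preserving_lebesgue_oppr :
  measure_preserving (@lebesgue_measure R) (-%R : R -> R).
Proof.
split; first exact: measurable_realfun.oppr_measurable.
by move=> A mA; exact: lebesgue_measureN.
Qed.

Lemma measure_preserving_pair d1 d2 (T1 : measurableType d1) (T2 : measurableType d2)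
    (m1 : {measure set T1 -> \bar R}) (m2 : {sigma_finite_measure set T2 -> \bar R})
    (f : T1 -> T1) (g : T2 -> T2) :
  measure_preserving m1 f -> measure_preserving m2 g ->
  measure_preserving (m1 \x m2) (fun p => (f p.1, g p.2)).
Proof.
move=> [mf m1f] [mg m2g]; split.
  by apply: measurable_fun_pair; exact: measurableT_comp.
move=> A mA; rewrite /pushforward /product_measure1 /=.
have sectionE x : xsection ((fun p => (f p.1, g p.2)) @^-1` A) x =
    g @^-1` xsection A (f x).
  by rewrite !xsectionE.
have m2gE B : measurable B -> m2 (g @^-1` B) = m2 B by exact: m2g.
transitivity (\int[m1]_x (m2 \o xsection A) (f x)).
  by apply: eq_integral => x _; rewrite /= sectionE m2gE//; exact: measurable_xsection.
rewrite -[LHS]/(\int[m1]_(x in f @^-1` setT) ((m2 \o xsection A) \o f) x).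
rewrite -ge0_integral_pushforward//; last exact: measurable_fun_xsection.
by apply: eq_measure_integral => B mB _; exact: m1f.
Qed.

Lemma ae_comp_measure_preserving d (T : measurableType d)
    (mu : {measure set T -> \bar R}) (f : T -> T) (P : T -> Prop) :
  measure_preserving mu f -> {ae mu, forall x, P x} -> {ae mu, forall x, P (f x)}.
Proof.
move=> [mf muf] [N [mN N0 PN]]; exists (f @^-1` N); split.
- by rewrite -[X in measurable X]setTI; apply: mf.
- by rewrite -N0 -(muf _ mN).
- by move=> x /= nPfx; exact: PN.
Qed.

End measure_preserving.

Lemma measure_preserving_lebesgue_sign (R : realType) (b : bool) :
  measure_preserving (@lebesgue_measure R) (fun x => (-1) ^+ b * x).
Proof.
case: b; last by rewrite (funext (@mul1r R)); exact: measure_preserving_id.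
by rewrite (funext (@mulN1r R)); exact: measure_preserving_lebesgue_oppr.
Qed.

Section ae_anticommuting.
Context d (T : measurableType d) (R : realType) (mu : {measure set T -> \bar R}).
Context (K : numFieldType) (n : nat).
Implicit Types (phi psi : T -> 'cV[K]_n) (A B : 'M[K]_n) (f g : T -> T).

Definition ae_lin_indep phi psi : Prop :=
  forall a b : K, {ae mu, forall x, a *: phi x + b *: psi x = 0} -> a = 0 /\ b = 0.

Definition mx_pullback A f phi : T -> 'cV[K]_n := fun x => A *m phi (f x).

Lemma ae_scale_eq0 (c : K) phi : c != 0 ->
  {ae mu, forall x, c *: phi x = 0} -> {ae mu, forall x, phi x = 0}.
Proof.
by move=> c_nz; apply: filterS => x /eqP; rewrite scaler_eq0 (negbTE c_nz) => /eqP.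
Qed.

Lemma ae_lin_dep_eigen phi psi : ~ {ae mu, forall x, phi x = 0} ->
  ~ ae_lin_indep phi psi -> exists c, {ae mu, forall x, psi x = c *: phi x}.
Proof.
move=> phi_nz /existsNP[a /existsNP[b /not_implyP[ab_ae ab_nz]]].
have b_nz : b != 0.
  apply/eqP => b0; apply: ab_nz; split => //.
  have [//|a_nz] := eqVneq a 0; exfalso; apply: phi_nz; apply: (ae_scale_eq0 a_nz).
  by apply: filterS ab_ae => x; rewrite b0 scale0r addr0.
exists (- a / b); apply: filterS ab_ae => x /eqP; rewrite addrC addr_eq0 => /eqP bpsi.
by rewrite -[psi x](scalerK b_nz) bpsi scalerN scalerA -scaleNr mulrC mulNr.
Qed.

Lemma mx_pullback_ae_eq0 A f phi :
  measure_preserving mu f -> involutive f -> A \in unitmx ->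
  {ae mu, forall x, mx_pullback A f phi x = 0} -> {ae mu, forall x, phi x = 0}.
Proof.
move=> mpf fK A_unit /(ae_comp_measure_preserving mpf); apply: filterS => x.
rewrite /mx_pullback fK => /(congr1 (mulmx (invmx A))).
by rewrite mulmxA mulVmx // mul1mx mulmx0.
Qed.

Lemma ae_eigenvalue_neq0 A f phi c :
  measure_preserving mu f -> involutive f -> A \in unitmx ->
  ~ {ae mu, forall x, phi x = 0} ->
  {ae mu, forall x, mx_pullback A f phi x = c *: phi x} -> c != 0.
Proof.
move=> mpf fK A_unit phi_nz eig; apply/eqP => c0; apply: phi_nz.
apply: (mx_pullback_ae_eq0 mpf fK A_unit); apply: filterS eig => x ->.
by rewrite c0 scale0r.
Qed.

Lemma ae_anticomm_eigen A B f g phi a b :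
  measure_preserving mu f -> measure_preserving mu g ->
  (forall x, f (g x) = g (f x)) -> A *m B = - (B *m A) ->
  {ae mu, forall x, mx_pullback A f phi x = a *: phi x} ->
  {ae mu, forall x, mx_pullback B g phi x = b *: phi x} ->
  {ae mu, forall x, (a * b) *: phi x = 0}.
Proof.
move=> mpf mpg fg AB eigA eigB.
have eigAB : {ae mu, forall x, A *m B *m phi (g (f x)) = (a * b) *: phi x}.
  apply: filterS2 eigA (ae_comp_measure_preserving mpf eigB) => x.
  rewrite /mx_pullback => eA eB.
  by rewrite -mulmxA eB -scalemxAr eA scalerA mulrC.
have eigBA : {ae mu, forall x, B *m A *m phi (f (g x)) = (a * b) *: phi x}.
  apply: filterS2 eigB (ae_comp_measure_preserving mpg eigA) => x.
  rewrite /mx_pullback => eB eA.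
  by rewrite -mulmxA eA -scalemxAr eB scalerA.
apply: filterS2 eigAB eigBA => x eAB eBA.
have abphi_opp : (a * b) *: phi x = - ((a * b) *: phi x).
  by rewrite -{1}eAB -eBA fg AB mulNmx.
have : 2%:R *: ((a * b) *: phi x) = 0 :> 'cV[K]_n.
  by rewrite scaler_nat mulr2n {1}abphi_opp addNr.
by move/eqP; rewrite scaler_eq0 pnatr_eq0 => /eqP.
Qed.

Lemma ae_lin_indep_anticomm A B f g phi :
  measure_preserving mu f -> measure_preserving mu g ->
  involutive f -> involutive g -> (forall x, f (g x) = g (f x)) ->
  A \in unitmx -> B \in unitmx -> A *m B = - (B *m A) ->
  ~ {ae mu, forall x, phi x = 0} ->
  ae_lin_indep phi (mx_pullback A f phi) \/ ae_lin_indep phi (mx_pullback B g phi).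
Proof.
move=> mpf mpg fK gK fg A_unit B_unit AB phi_nz.
have [|depA] := pselect (ae_lin_indep phi (mx_pullback A f phi)); [by left | right].
apply: contrapT => depB.
have [a eigA] := ae_lin_dep_eigen phi_nz depA.
have [b eigB] := ae_lin_dep_eigen phi_nz depB.
have ab_nz : a * b != 0.
  by rewrite mulf_neq0 // ?(ae_eigenvalue_neq0 mpf fK A_unit phi_nz eigA)
    ?(ae_eigenvalue_neq0 mpg gK B_unit phi_nz eigB).
exact/phi_nz/(ae_scale_eq0 ab_nz)/(ae_anticomm_eigen mpf mpg fg AB eigA eigB).
Qed.

End ae_anticommuting.

Lemma invmx_eq (R : comUnitRingType) n (A B : 'M[R]_n) : A *m B = 1%:M -> invmx A = B.
Proof.
move=> AB; have [A_unit _] := mulmx1_unit AB.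
by rewrite -[invmx A]mulmx1 -AB mulmxA mulVmx // mul1mx.
Qed.

Lemma mulmx_cV_ext (R : pzSemiRingType) m n (M N : 'M[R]_(m, n)) :
  (forall x : 'cV[R]_n, M *m x = N *m x) -> M = N.
Proof.
move=> MN; apply/matrixP => i j.
by have := congr1 (fun v : 'cV_m => v i 0) (MN (delta_mx j 0)); rewrite -!colE !mxE.
Qed.

Section pauli.
Variable R : realType.
Implicit Types (a b c d : R[i]) (A M : 'M[R[i]]_2).
Local Notation pauli := (pauli R).

Lemma mx2_mul a b c d a' b' c' d' :
  mx2 a b c d *m mx2 a' b' c' d' =
  mx2 (a * a' + b * c') (a * b' + b * d') (c * a' + d * c') (c * b' + d * d').
Proof.
apply/matrixP => i j; rewrite !mxE big_ord_recl big_ord1 !mxE /=.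
by case: i => [[|[|i]] Hi] //=; case: j => [[|[|j]] Hj].
Qed.

Lemma mx2_scale e a b c d : e *: mx2 a b c d = mx2 (e * a) (e * b) (e * c) (e * d).
Proof.
apply/matrixP => i j; rewrite !mxE.
by case: i => [[|[|i]] Hi] //=; case: j => [[|[|j]] Hj].
Qed.

Lemma mx2_add a b c d a' b' c' d' :
  mx2 a b c d + mx2 a' b' c' d' = mx2 (a + a') (b + b') (c + c') (d + d').
Proof.
apply/matrixP => i j; rewrite !mxE.
by case: i => [[|[|i]] Hi] //=; case: j => [[|[|j]] Hj].
Qed.

Lemma mx2_opp a b c d : - mx2 a b c d = mx2 (- a) (- b) (- c) (- d).
Proof.
apply/matrixP => i j; rewrite !mxE.
by case: i => [[|[|i]] Hi] //=; case: j => [[|[|j]] Hj].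
Qed.

Lemma mx2_1 : 1%:M = mx2 1 0 0 1 :> 'M[R[i]]_2.
Proof.
apply/matrixP => i j; rewrite !mxE.
by case: i => [[|[|i]] Hi] //=; case: j => [[|[|j]] Hj].
Qed.

Lemma det_mx2 a b c d : \det (mx2 a b c d) = a * d - b * c.
Proof.
rewrite (expand_det_row _ 0) big_ord_recl big_ord1 /cofactor !det_mx11 !mxE /=.
by rewrite /bump /= expr0 expr1 mul1r mulN1r mulrN.
Qed.

Lemma adj2_mx2 a b c d : adj2 (mx2 a b c d) = mx2 a^* c^* b^* d^*.
Proof.
apply/matrixP => i j; rewrite !mxE.
by case: i => [[|[|i]] Hi] //=; case: j => [[|[|j]] Hj].
Qed.

Local Ltac complex_ring := rewrite /=; simpc; try (congr (_ +i* _); ring).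

Lemma pauli_sq k : pauli k *m pauli k = 1%:M.
Proof.
by rewrite mx2_1; case: k => [[|[|[|k]]] Hk] //=; rewrite mx2_mul; congr mx2; complex_ring.
Qed.

Lemma pauli_anticomm j k : j != k -> pauli j *m pauli k = - (pauli k *m pauli j).
Proof.
case: j => [[|[|[|j]]] Hj]; case: k => [[|[|[|k]]] Hk] //= _;
  by rewrite !mx2_mul mx2_opp; congr mx2; complex_ring.
Qed.

Lemma adj2_pauli k : adj2 (pauli k) = pauli k.
Proof.
by case: k => [[|[|[|k]]] Hk] //; rewrite /pauli /= adj2_mx2; congr mx2; complex_ring.
Qed.

Lemma det_pauli k : \det (pauli k) = -1.
Proof. by case: k => [[|[|[|k]]] Hk] //; rewrite /pauli /= det_mx2; complex_ring. Qed.

Lemma adj2Z a M : adj2 (a *: M) = a^* *: adj2 M.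
Proof. by rewrite /adj2 map_mxZ linearZ. Qed.

Lemma SU2_unit A : SU2 A -> A \in unitmx.
Proof. by case=> /mulmx1_unit[]. Qed.

Lemma invmx_SU2 A : SU2 A -> invmx A = adj2 A.
Proof. by case=> /invmx_eq. Qed.

Lemma SU2_ipauli k : SU2 ('i *: pauli k).
Proof.
split; last by rewrite detZ det_pauli; complex_ring.
rewrite adj2Z adj2_pauli -scalemxAr -scalemxAl scalerA pauli_sq.
by rewrite [_ * _](_ : _ = 1) ?scale1r //; complex_ring.
Qed.

Lemma ipauli_anticomm j k : j != k ->
  ('i *: pauli j) *m ('i *: pauli k) = - (('i *: pauli k) *m ('i *: pauli j)).
Proof. by move=> jk; rewrite -!scalemxAl -!scalemxAr pauli_anticomm // !scalerN. Qed.

Lemma conj_ipauli k M :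
  ('i *: pauli k) *m M *m invmx ('i *: pauli k) = pauli k *m M *m pauli k.
Proof.
rewrite invmx_SU2; last exact: SU2_ipauli.
rewrite adj2Z adj2_pauli -scalemxAr -!scalemxAl scalerA.
by rewrite [_ * _](_ : _ = 1) ?scale1r //; complex_ring.
Qed.

Lemma pauli_conj j k : pauli k *m pauli j *m pauli k = (-1) ^+ (j != k) *: pauli j.
Proof.
have [->|jk] := eqVneq j k; first by rewrite pauli_sq mul1mx scale1r.
by rewrite pauli_anticomm 1?eq_sym // mulNmx -mulmxA pauli_sq mulmx1 expr1 scaleN1r.
Qed.

Lemma xsigmaE (x : 'cV[R]_3) :
  xsigma x = mx2 (x 2 0)%:C (x 0 0 +i* - x 1 0) (x 0 0 +i* x 1 0) (- x 2 0)%:C.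
Proof.
rewrite /xsigma !big_ord_recl big_ord0 addr0.
have -> : lift ord0 (lift ord0 ord0) = 2 :> 'I_3 by exact: val_inj.
have -> : lift ord0 ord0 = 1 :> 'I_3 by exact: val_inj.
by rewrite /pauli /= !mx2_scale !mx2_add; congr mx2; complex_ring.
Qed.

Lemma xsigma_inj : injective (@xsigma R).
Proof.
move=> u v; rewrite !xsigmaE => /matrixP E.
move: (E 0 0) (E 1 0); rewrite !mxE /= => -[u2] -[u0 u1].
apply/colP => -[[|[|[|i]]] Hi] //; [move: u0 | move: u1 | move: u2];
  by congr (u _ 0 = v _ 0); exact: val_inj.
Qed.

End pauli.

Section rotation_pi.
Variable R : realType.
Local Notation pauli := (pauli R).

Definition rot_pi (k : 'I_3) : 'M[R]_3 := diag_mx (\row_j (-1) ^+ (j != k)).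

Lemma rot_pi_sq k : rot_pi k *m rot_pi k = 1%:M.
Proof.
rewrite mulmx_diag -diag_const_mx; congr diag_mx.
by apply/rowP => j; rewrite !mxE -signr_addb addbb.
Qed.

Lemma rot_piC j k : rot_pi j *m rot_pi k = rot_pi k *m rot_pi j.
Proof. exact: diag_mxC. Qed.

Lemma SO3_rot_pi k : SO3 (rot_pi k).
Proof.
split; first by rewrite tr_diag_mx rot_pi_sq.
rewrite det_diag !big_ord_recl big_ord0 !mxE.
by case: k => [[|[|[|k]]] Hk] //=; rewrite ?expr0 ?expr1 ?mul1r ?mulr1 ?mulN1r ?opprK.
Qed.

Lemma xsigma_rot_pi k x : xsigma (rot_pi k *m x) = pauli k *m xsigma x *m pauli k.
Proof.
rewrite /xsigma mulmx_sumr mulmx_suml; apply: eq_bigr => j _.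
rewrite mul_diag_mx mxE -scalemxAr -scalemxAl pauli_conj scalerA.
by rewrite rmorphM mxE rmorph_sign mulrC.
Qed.

Lemma rotA_ipauli k : rotA ('i *: pauli k) = rot_pi k.
Proof.
apply: xget_unique => [|M [_ M_conj]].
  by split=> [|x]; [exact: SO3_rot_pi | rewrite conj_ipauli xsigma_rot_pi].
apply: mulmx_cV_ext => x; apply: xsigma_inj.
by rewrite M_conj conj_ipauli xsigma_rot_pi.
Qed.

Lemma pt3K : cancel (@vec3 R) (@pt3 R).
Proof. by case=> [[a b] c]; rewrite /pt3 !mxE. Qed.

Lemma vec3K : cancel (@pt3 R) (@vec3 R).
Proof.
move=> v; apply/colP => i; rewrite !mxE.
by case: i => [[|[|[|i]]] Hi] //=; congr (v _ 0); exact: val_inj.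
Qed.

Definition rot_pi_R3 k (p : R3 R) : R3 R := pt3 (rot_pi k *m vec3 p).

Lemma rot_pi_R3K k : involutive (rot_pi_R3 k).
Proof. by move=> p; rewrite /rot_pi_R3 vec3K mulmxA rot_pi_sq mul1mx pt3K. Qed.

Lemma rot_pi_R3C j k p : rot_pi_R3 j (rot_pi_R3 k p) = rot_pi_R3 k (rot_pi_R3 j p).
Proof. by rewrite /rot_pi_R3 !vec3K !mulmxA rot_piC. Qed.

Lemma rot_pi_R3E k : rot_pi_R3 k = fun p =>
  (((-1) ^+ (0 != k) * p.1.1, (-1) ^+ (1 != k) * p.1.2), (-1) ^+ (2 != k) * p.2).
Proof. by apply: funext => p; rewrite /rot_pi_R3 /pt3 mul_diag_mx !mxE. Qed.

Lemma measure_preserving_rot_pi_R3 k : measure_preserving (@leb3 R) (rot_pi_R3 k).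
Proof.
have sign b := measure_preserving_lebesgue_sign R b.
rewrite rot_pi_R3E.
exact: (measure_preserving_pair (m1 := (lebesgue_measure \x lebesgue_measure)%E)
  (m2 := lebesgue_measure) (measure_preserving_pair (sign (0 != k)) (sign (1 != k)))
  (sign (2 != k))).
Qed.

Lemma act_ipauli k phi :
  act ('i *: pauli k) phi = mx_pullback ('i *: pauli k) (rot_pi_R3 k) phi.
Proof. by apply: funext => x; rewrite /act rotA_ipauli (invmx_eq (rot_pi_sq k)). Qed.

End rotation_pi.

Theorem lemma1 (R : realType) (phi : R3 R -> 'cV[R[i]]_2) :
  L2 phi ->
  ~ {ae @leb3 R, forall x, phi x = 0} ->
  exists A, @SU2 R A /\ lin_indep_L2 phi (act A phi).
Proof.
move=> _ phi_nz.
have := ae_lin_indep_anticomm (measure_preserving_rot_pi_R3 R 0)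
  (measure_preserving_rot_pi_R3 R 1) (rot_pi_R3K 0) (rot_pi_R3K 1) (rot_pi_R3C 0 1)
  (SU2_unit (SU2_ipauli R 0)) (SU2_unit (SU2_ipauli R 1)) (@ipauli_anticomm R 0 1 isT) phi_nz.
case=> indep; [exists ('i *: pauli R 0) | exists ('i *: pauli R 1)];
  by split; [exact: SU2_ipauli | rewrite act_ipauli].
Qed.
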